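(* Consider the fixed-share algorithm with time-varying parameters, with $\eta_t=\sqrt{\ln(dt)/t}$ for $t\ge3$, $\eta_0=\eta_1=\eta_2=\eta_3$, and $\alpha_t=1/t$ for $t\ge1$. Then for all $T\ge3$ and all loss vectors $\ell_1,\dots,\ell_T\in[0,1]^d$, \[ \max_{1\le r\le s\le T}\Big\{\sum_{t=r}^s\hat p_t^\top\ell_t-\min_{q\in\Delta_d}\sum_{t=r}^sq^\top\ell_t\Big\}\le\sqrt{2T\ln(dT)}+\sqrt{3\ln(3d)}. \]
   Context: Let $d\ge1$ and $\Delta_d=\{q\in[0,1]^d:\sum_{i=1}^d q_i=1\}$. The fixed-share algorithm with time-varying parameters uses sequences $(\eta_t)_{t\ge1}$ of positive numbers and $(\alpha_t)_{t\ge1}$ in $(0,1]$, with the convention $\eta_0=\eta_1$. It sets $\hat p_1=(1/d,\dots,1/d)$; at each round $t\ge1$ it predicts $\hat p_t\in\Delta_d$, observes an arbitrary loss vector $\ell_t=(\ell_{1,t},\dots,\ell_{d,t})\in[0,1]^d$, suffers loss $\hat p_t^\top\ell_t$, and then sets, for $j=1,\dots,d$, $v_{j,t+1}=\hat p_{j,t}^{\,\eta_t/\eta_{t-1}}e^{-\eta_t\ell_{j,t}}\big/\sum_{i=1}^d\hat p_{i,t}^{\,\eta_t/\eta_{t-1}}e^{-\eta_t\ell_{i,t}}$ and $\hat p_{j,t+1}=\alpha_t/d+(1-\alpha_t)v_{j,t+1}$. (The maximum ranges over integers $r,s$.) *)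

From Stdlib Require Import Reals Lra.
Open Scope R_scope.

Fixpoint rsum (f : nat -> R) (n : nat) : R :=
  match n with
  | O => 0
  | S k => rsum f k + f k
  end.

(* sum_{t=r}^{s} g t  (integers r <= s) *)
Definition range_sum (g : nat -> R) (r s : nat) : R :=
  rsum (fun k => g (r + k)%nat) (S (s - r)).

Definition dot (d : nat) (q x : nat -> R) : R := rsum (fun j => q j * x j) d.

Definition in_simplex (d : nat) (q : nat -> R) : Prop :=
  (forall j, (j < d)%nat -> 0 <= q j <= 1) /\ rsum q d = 1.

(* One update of fixed share at round t (t >= 1), given p_t, eta_t, eta_{t-1},
   alpha_t and loss vector l_t; returns p_{t+1}. *)
Definition fs_update (d : nat) (p : nat -> R) (eta_t eta_tm1 alpha_t : R)
  (lt : nat -> R) : nat -> R :=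
  let w := fun j => Rpower (p j) (eta_t / eta_tm1) * exp (- eta_t * lt j) in
  let Z := rsum w d in
  fun j => alpha_t / INR d + (1 - alpha_t) * (w j / Z).

(* fs_weights d eta alpha l n = \hat p_{n+1}.
   eta : nat -> R gives eta_t for all t >= 0 (including the convention eta_0),
   alpha : nat -> R gives alpha_t for t >= 1, l t j = l_{j+1,t}. *)
Fixpoint fs_weights (d : nat) (eta alpha : nat -> R) (l : nat -> nat -> R)
  (n : nat) : nat -> R :=
  match n with
  | O => fun _ => 1 / INR d
  | S k => fs_update d (fs_weights d eta alpha l k)
             (eta (S k)) (eta k) (alpha (S k)) (l (S k))
  end.

Definition phat (d : nat) (eta alpha : nat -> R) (l : nat -> nat -> R)
  (t : nat) : nat -> R :=
  fs_weights d eta alpha l (t - 1).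

Definition eta_thm (d : nat) (t : nat) : R :=
  if (t <? 3)%nat then sqrt (ln (INR d * 3) / 3)
  else sqrt (ln (INR d * INR t) / INR t).

(* alpha_t = 1/t for t >= 1 (value at t = 0 is never used). *)
Definition alpha_thm (t : nat) : R := 1 / INR t.

From Stdlib Require Import Reals Lra Lia.
From Coquelicot Require Import Coquelicot.
Open Scope R_scope.

(* One round is analysed for any positive prediction p, learning rates
   0 < e <= e' and comparator q, in terms of the log-score
   logscore q p = sum_j q_j ln p_j ([round_regret]):
     p.l - q.l <= e'/8 + (1/e - 1/e') ln d + logscore q v / e - logscore q p / e',
   where v is the exponential-weights vector.  It combines Hoeffding's lemma
   (for the loss of p) with a power-mean inequality (for the tempered weights
   p^(e/e')).  Fixed share then mixes v with the uniform vector, which costs at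
   most -ln (1 - alpha) in log-score but keeps it above ln (alpha / d).

   With the schedule of the theorem, each round t >= 2 is bounded by the
   increase of budget + potential, where budget t = sqrt (2 ln (d T) t) / 4
   accounts for the Hoeffding terms eta_(t-1)/8 and the potential
   ln (d t) / eta_t + logscore q p_(t+1) / eta_t lies in [0, ln (d t) / eta_t],
   the upper end being sqrt (t ln (d t)) for t >= 3.
   Telescoping over [r, s], plus a separate first round (uniform p_1),
   gives the bound sqrt (2 T ln (d T)) + sqrt (3 ln (3 d)). *)

Lemma rsum_ext (f g : nat -> R) (n : nat) :
  (forall j, (j < n)%nat -> f j = g j) -> rsum f n = rsum g n.
Proof.
  induction n as [|n IH]; intros H; simpl; [reflexivity|].
  rewrite IH by (intros; apply H; lia). rewrite H by lia. reflexivity.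
Qed.

Lemma rsum_le (f g : nat -> R) (n : nat) :
  (forall j, (j < n)%nat -> f j <= g j) -> rsum f n <= rsum g n.
Proof.
  induction n as [|n IH]; intros H; simpl; [lra|].
  assert (rsum f n <= rsum g n) by (apply IH; intros; apply H; lia).
  assert (f n <= g n) by (apply H; lia). lra.
Qed.

Lemma rsum_plus (f g : nat -> R) (n : nat) :
  rsum (fun j => f j + g j) n = rsum f n + rsum g n.
Proof. induction n as [|n IH]; simpl; [lra|]. rewrite IH. ring. Qed.

Lemma rsum_minus (f g : nat -> R) (n : nat) :
  rsum (fun j => f j - g j) n = rsum f n - rsum g n.
Proof. induction n as [|n IH]; simpl; [lra|]. rewrite IH. ring. Qed.

Lemma rsum_scal (c : R) (f : nat -> R) (n : nat) :
  rsum (fun j => c * f j) n = c * rsum f n.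
Proof. induction n as [|n IH]; simpl; [lra|]. rewrite IH. ring. Qed.

Lemma rsum_const (c : R) (n : nat) : rsum (fun _ => c) n = INR n * c.
Proof. induction n as [|n IH]; simpl rsum; [simpl; ring|]. rewrite IH, S_INR. ring. Qed.

Lemma rsum_nonneg (f : nat -> R) (n : nat) :
  (forall j, (j < n)%nat -> 0 <= f j) -> 0 <= rsum f n.
Proof.
  intros H. replace 0 with (rsum (fun _ => 0) n) by (rewrite rsum_const; ring).
  apply rsum_le. exact H.
Qed.

Lemma rsum_pos (f : nat -> R) (n : nat) :
  (1 <= n)%nat -> (forall j, (j < n)%nat -> 0 < f j) -> 0 < rsum f n.
Proof.
  intros Hn H. destruct n as [|n]; [lia|]. simpl.
  assert (0 <= rsum f n) by (apply rsum_nonneg; intros; left; apply H; lia).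
  assert (0 < f n) by (apply H; lia). lra.
Qed.

Lemma rsum_term_le (f : nat -> R) (n j : nat) :
  (forall k, (k < n)%nat -> 0 <= f k) -> (j < n)%nat -> f j <= rsum f n.
Proof.
  induction n as [|n IH]; intros H Hj; [lia|]. simpl.
  assert (0 <= f n) by (apply H; lia).
  destruct (Nat.eq_dec j n) as [->|Hjn].
  - assert (0 <= rsum f n) by (apply rsum_nonneg; intros; apply H; lia). lra.
  - assert (f j <= rsum f n) by (apply IH; [intros; apply H; lia | lia]). lra.
Qed.

Lemma rsum_shift (f : nat -> R) (n : nat) :
  rsum f (S n) = f O + rsum (fun k => f (S k)) n.
Proof.
  induction n as [|n IH]; [simpl; ring|].
  change (rsum f (S (S n))) with (rsum f (S n) + f (S n)). rewrite IH. simpl. ring.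
Qed.

Lemma exp_convex (a u : R) : 0 <= a <= 1 -> exp (a * u) <= 1 - a + a * exp u.
Proof.
  intros Ha. set (E := exp (a * u)).
  assert (HE : 0 < E) by apply exp_pos.
  (* tangent-line bounds of exp at the point a u, evaluated at 0 and at u *)
  assert (H0 : 1 >= E * (1 - a * u)).
  { pose proof (exp_ineq1_le (- (a * u))).
    assert (exp (- (a * u)) * E = 1)
      by (unfold E; rewrite <- exp_plus, Rplus_opp_l; apply exp_0).
    nra. }
  assert (Hu : exp u >= E * (1 + (1 - a) * u)).
  { pose proof (exp_ineq1_le ((1 - a) * u)).
    assert (exp ((1 - a) * u) * E = exp u)
      by (unfold E; rewrite <- exp_plus; f_equal; ring).
    nra. }
  assert ((1 - a) * 1 >= (1 - a) * (E * (1 - a * u))) by (apply Rmult_ge_compat_l; lra).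
  assert (a * exp u >= a * (E * (1 + (1 - a) * u))) by (apply Rmult_ge_compat_l; lra).
  nra.
Qed.

Lemma nonneg_of_deriv_nonneg (f f' : R -> R) :
  f 0 = 0 ->
  (forall x, 0 <= x -> derivable_pt_lim f x (f' x)) ->
  (forall x, 0 <= x -> 0 <= f' x) ->
  forall x, 0 <= x -> 0 <= f x.
Proof.
  intros Hf0 Hder Hpos x Hx. destruct (Req_dec x 0) as [->|Hx0]; [lra|].
  destruct (MVT_cor3 f f' 0 x) as [c [Hc0 [Hcx Hmvt]]]; [lra| intros; apply Hder; lra |].
  rewrite Hmvt, Hf0. pose proof (Hpos c Hc0). nra.
Qed.

Lemma bernoulli_mgf_pos (m h : R) : 0 <= m <= 1 -> 0 <= h -> 0 < 1 - m + m * exp (- h).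
Proof.
  intros Hm Hh. assert (0 < exp (- h)) by apply exp_pos.
  destruct (Req_dec m 0) as [->|]; [lra|]. nra.
Qed.

Lemma hoeffding_bernoulli (m h : R) : 0 <= m <= 1 -> 0 <= h ->
  ln (1 - m + m * exp (- h)) <= - h * m + h * h / 8.
Proof.
  intros Hm Hh.
  (* b x is the tilted mean; its derivative is - b x (1 - b x) >= -1/4 *)
  set (b := fun x => m * exp (- x) / (1 - m + m * exp (- x))).
  assert (Hb0 : b 0 = m).
  { unfold b. rewrite Ropp_0, exp_0. field_simplify; [reflexivity|lra]. }
  assert (Htilt : forall x, 0 <= x -> 0 <= x / 4 - (m - b x)).
  { apply (nonneg_of_deriv_nonneg _ (fun x => 1 / 4 - b x * (1 - b x))).
    - rewrite Hb0. lra.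
    - intros x Hx. pose proof (bernoulli_mgf_pos m x Hm Hx).
      apply is_derive_Reals. unfold b. auto_derive; [lra|]. field. lra.
    - intros x _. pose proof (pow2_ge_0 (b x - 1 / 2)). nra. }
  assert (Hmain : 0 <= h * h / 8 - (ln (1 - m + m * exp (- h)) + m * h)).
  { apply (nonneg_of_deriv_nonneg
             (fun x => x * x / 8 - (ln (1 - m + m * exp (- x)) + m * x))
             (fun x => x / 4 - (m - b x))); [| | exact Htilt | exact Hh].
    - rewrite Ropp_0, exp_0. replace (1 - m + m * 1) with 1 by ring. rewrite ln_1. lra.
    - intros x Hx. pose proof (bernoulli_mgf_pos m x Hm Hx).
      apply is_derive_Reals. unfold b. auto_derive; [lra|]. field. lra. }
  lra.
Qed.

Lemma hoeffding_lemma (d : nat) (p l : nat -> R) (h : R) :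
  (forall j, (j < d)%nat -> 0 <= p j) -> rsum p d = 1 ->
  (forall j, (j < d)%nat -> 0 <= l j <= 1) -> 0 <= h ->
  ln (rsum (fun j => p j * exp (- h * l j)) d) <= - h * dot d p l + h * h / 8.
Proof.
  intros Hp Hsum Hl Hh.
  set (m := dot d p l).
  assert (Hm : 0 <= m <= 1).
  { unfold m, dot. split.
    - apply rsum_nonneg. intros j Hj. pose proof (Hl j Hj); pose proof (Hp j Hj). nra.
    - rewrite <- Hsum. apply rsum_le. intros j Hj.
      pose proof (Hl j Hj); pose proof (Hp j Hj). nra. }
  (* each exp (- h l_j) lies below the chord between exp 0 and exp (- h) *)
  assert (Hchord : rsum (fun j => p j * exp (- h * l j)) d <= 1 - m + m * exp (- h)).
  { apply Rle_trans with (rsum (fun j => p j * (1 - l j + l j * exp (- h))) d).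
    - apply rsum_le. intros j Hj. apply Rmult_le_compat_l; [apply Hp; exact Hj|].
      replace (- h * l j) with (l j * (- h)) by ring. apply exp_convex, Hl, Hj.
    - right. unfold m, dot.
      rewrite (rsum_ext _ (fun j => p j - p j * l j + exp (- h) * (p j * l j)))
        by (intros; ring).
      rewrite rsum_plus, rsum_minus, rsum_scal, Hsum. ring. }
  assert (Hlow : exp (- h) <= rsum (fun j => p j * exp (- h * l j)) d).
  { rewrite <- (Rmult_1_r (exp (- h))), <- Hsum, <- rsum_scal.
    apply rsum_le. intros j Hj. rewrite Rmult_comm.
    apply Rmult_le_compat_l; [apply Hp; exact Hj|].
    destruct (Hl j Hj). destruct (Req_dec (l j) 1) as [->|]; [right; f_equal; ring|].
    destruct (Req_dec h 0) as [->|]; [right; f_equal; ring|].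
    left. apply exp_increasing. nra. }
  pose proof (exp_pos (- h)).
  eapply Rle_trans; [apply ln_le; [lra | exact Hchord]|].
  apply hoeffding_bernoulli; assumption.
Qed.

Lemma log_sum_power_le (d : nat) (x : nat -> R) (a : R) :
  (1 <= d)%nat -> (forall j, (j < d)%nat -> 0 < x j) -> 0 <= a <= 1 ->
  ln (rsum (fun j => exp (a * ln (x j))) d) <= (1 - a) * ln (INR d) + a * ln (rsum x d).
Proof.
  intros Hd Hx Ha.
  assert (HX : 0 < rsum x d) by (apply rsum_pos; assumption).
  assert (HdR : 0 < INR d) by (apply lt_0_INR; lia).
  set (c := rsum x d / INR d).
  assert (Hc : 0 < c) by (unfold c; apply Rdiv_lt_0_compat; assumption).
  (* bound each x_j^a by the tangent of t |-> t^a at the mean c *)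
  assert (Hterm : rsum (fun j => exp (a * ln (x j))) d
                  <= rsum (fun j => exp (a * ln c) * (1 - a + a * (x j / c))) d).
  { apply rsum_le. intros j Hj.
    replace (a * ln (x j)) with (a * ln c + a * (ln (x j) - ln c)) by ring.
    rewrite exp_plus. apply Rmult_le_compat_l; [left; apply exp_pos|].
    replace (x j / c) with (exp (ln (x j) - ln c))
      by (rewrite <- ln_div, exp_ln by (try apply Rdiv_lt_0_compat; auto); reflexivity).
    apply exp_convex, Ha. }
  rewrite rsum_scal, rsum_plus, rsum_const, rsum_scal in Hterm.
  replace (rsum (fun j => x j / c) d) with (rsum x d / c) in Hterm
    by (unfold Rdiv; rewrite Rmult_comm, <- rsum_scal; apply rsum_ext; intros; ring).
  replace (INR d * (1 - a) + a * (rsum x d / c)) with (INR d) in Hterm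
    by (unfold c; field; lra).
  assert (0 < rsum (fun j => exp (a * ln (x j))) d)
    by (apply rsum_pos; [assumption | intros; apply exp_pos]).
  apply ln_le in Hterm; [|assumption].
  rewrite ln_mult, ln_exp in Hterm by (try apply exp_pos; assumption).
  unfold c in Hterm. rewrite ln_div in Hterm by assumption. lra.
Qed.

Definition pos_distr (d : nat) (p : nat -> R) : Prop :=
  (forall j, (j < d)%nat -> 0 < p j) /\ rsum p d = 1.

Definition logscore (d : nat) (q p : nat -> R) : R := rsum (fun j => q j * ln (p j)) d.

Definition exp_update (d : nat) (p : nat -> R) (e e' : R) (l : nat -> R) : nat -> R :=
  fun j => (Rpower (p j) (e / e') * exp (- e * l j))
           / rsum (fun i => Rpower (p i) (e / e') * exp (- e * l i)) d.

Lemma fs_update_mix (d : nat) (p : nat -> R) (e e' alpha : R) (l : nat -> R) (j : nat) :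
  fs_update d p e e' alpha l j = alpha / INR d + (1 - alpha) * exp_update d p e e' l j.
Proof. reflexivity. Qed.

Lemma pos_distr_le1 (d : nat) (p : nat -> R) (j : nat) :
  pos_distr d p -> (j < d)%nat -> p j <= 1.
Proof.
  intros [Hpos Hsum] Hj. rewrite <- Hsum.
  apply rsum_term_le; [intros; left; apply Hpos|]; assumption.
Qed.

Lemma exp_update_distr (d : nat) (p : nat -> R) (e e' : R) (l : nat -> R) :
  (1 <= d)%nat -> pos_distr d (exp_update d p e e' l).
Proof.
  intros Hd. set (w := fun i => Rpower (p i) (e / e') * exp (- e * l i)).
  assert (Hw : forall j, 0 < w j)
    by (intros; unfold w, Rpower; apply Rmult_lt_0_compat; apply exp_pos).
  assert (HZ : 0 < rsum w d) by (apply rsum_pos; auto).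
  split.
  - intros j _. apply Rdiv_lt_0_compat; [apply Hw | exact HZ].
  - change (rsum (fun j => w j / rsum w d) d = 1).
    rewrite (rsum_ext _ (fun j => / rsum w d * w j)) by (intros; unfold Rdiv; ring).
    rewrite rsum_scal. field. lra.
Qed.

Lemma fs_update_distr (d : nat) (p : nat -> R) (e e' alpha : R) (l : nat -> R) :
  (1 <= d)%nat -> 0 < alpha <= 1 -> pos_distr d (fs_update d p e e' alpha l).
Proof.
  intros Hd Ha. destruct (exp_update_distr d p e e' l Hd) as [Hv Hvsum].
  assert (HdR : 0 < INR d) by (apply lt_0_INR; lia).
  split.
  - intros j Hj. rewrite fs_update_mix.
    assert (0 < alpha / INR d) by (apply Rdiv_lt_0_compat; lra).
    pose proof (Hv j Hj). assert (0 <= (1 - alpha) * exp_update d p e e' l j) by nra. lra.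
  - rewrite (rsum_ext _ (fun j => alpha / INR d + (1 - alpha) * exp_update d p e e' l j))
      by (intros; apply fs_update_mix).
    rewrite rsum_plus, rsum_const, rsum_scal, Hvsum. field. lra.
Qed.

Lemma logscore_const (d : nat) (q : nat -> R) (c : R) :
  rsum q d = 1 -> logscore d q (fun _ => c) = ln c.
Proof.
  intros Hq. unfold logscore.
  rewrite (rsum_ext _ (fun j => ln c * q j)) by (intros; ring).
  rewrite rsum_scal, Hq. ring.
Qed.

Lemma logscore_nonpos (d : nat) (q p : nat -> R) :
  in_simplex d q -> pos_distr d p -> logscore d q p <= 0.
Proof.
  intros [Hq _] Hp. unfold logscore.
  replace 0 with (rsum (fun _ => 0) d) by (rewrite rsum_const; ring).
  apply rsum_le. intros j Hj.
  assert (ln (p j) <= 0)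
    by (rewrite <- ln_1; apply ln_le; [apply Hp | apply (pos_distr_le1 d)]; assumption).
  pose proof (Hq j Hj). nra.
Qed.

Lemma logscore_scale_le (d : nat) (q v p : nat -> R) (k : R) :
  in_simplex d q -> 0 < k ->
  (forall j, (j < d)%nat -> 0 < v j /\ k * v j <= p j) ->
  logscore d q v + ln k <= logscore d q p.
Proof.
  intros [Hq Hqsum] Hk Hvp. unfold logscore.
  replace (rsum (fun j => q j * ln (v j)) d + ln k)
    with (rsum (fun j => q j * (ln k + ln (v j))) d)
    by (rewrite (rsum_ext _ (fun j => ln k * q j + q j * ln (v j))) by (intros; ring);
        rewrite rsum_plus, rsum_scal, Hqsum; ring).
  apply rsum_le. intros j Hj. destruct (Hvp j Hj) as [Hv Hkv].
  apply Rmult_le_compat_l; [apply Hq; exact Hj|].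
  rewrite <- ln_mult by assumption. apply ln_le; [apply Rmult_lt_0_compat|]; assumption.
Qed.

Lemma fs_update_logscore_ge_exp (d : nat) (q p : nat -> R) (e e' alpha : R) (l : nat -> R) :
  (1 <= d)%nat -> in_simplex d q -> 0 < alpha < 1 ->
  logscore d q (exp_update d p e e' l) + ln (1 - alpha)
  <= logscore d q (fs_update d p e e' alpha l).
Proof.
  intros Hd Hq Ha. apply logscore_scale_le; [assumption | lra |].
  intros j Hj. destruct (exp_update_distr d p e e' l Hd) as [Hv _].
  split; [apply Hv; exact Hj|]. rewrite fs_update_mix.
  assert (0 < alpha / INR d) by (apply Rdiv_lt_0_compat; [lra | apply lt_0_INR; lia]).
  lra.
Qed.

Lemma fs_update_logscore_ge_share (d : nat) (q p : nat -> R) (e e' alpha : R) (l : nat -> R) :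
  (1 <= d)%nat -> in_simplex d q -> 0 < alpha <= 1 ->
  ln (alpha / INR d) <= logscore d q (fs_update d p e e' alpha l).
Proof.
  intros Hd Hq Ha. pose proof (proj2 Hq) as Hqsum.
  rewrite <- (Rplus_0_l (ln _)), <- ln_1, <- (logscore_const d q 1 Hqsum).
  apply logscore_scale_le; [assumption | apply Rdiv_lt_0_compat; [lra | apply lt_0_INR; lia] |].
  intros j Hj. split; [lra|]. rewrite fs_update_mix.
  destruct (exp_update_distr d p e e' l Hd) as [Hv _]. pose proof (Hv j Hj).
  assert (0 <= (1 - alpha) * exp_update d p e e' l j) by nra. lra.
Qed.

Lemma logscore_exp_update (d : nat) (q p l : nat -> R) (e e' : R) :
  (forall j, (j < d)%nat -> 0 < p j) -> rsum q d = 1 ->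
  logscore d q (exp_update d p e e' l)
  = e / e' * logscore d q p - e * dot d q l
    - ln (rsum (fun i => Rpower (p i) (e / e') * exp (- e * l i)) d).
Proof.
  intros Hp Hqsum.
  set (Z := rsum (fun i => Rpower (p i) (e / e') * exp (- e * l i)) d).
  assert (HZ : 0 < Z)
    by (destruct d; [simpl in Hqsum; lra|];
        apply rsum_pos; [lia | intros; unfold Rpower; apply Rmult_lt_0_compat; apply exp_pos]).
  unfold logscore, dot.
  rewrite (rsum_ext _ (fun j => e / e' * (q j * ln (p j)) - e * (q j * l j) + (- ln Z) * q j)).
  - rewrite rsum_plus, rsum_minus, !rsum_scal, Hqsum. ring.
  - intros j Hj. unfold exp_update. fold Z.
    rewrite ln_div by (try unfold Rpower; try apply Rmult_lt_0_compat; try apply exp_pos; assumption).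
    unfold Rpower. rewrite <- exp_plus, ln_exp. ring.
Qed.

Lemma round_regret (d : nat) (p q l : nat -> R) (e e' : R) :
  (1 <= d)%nat -> pos_distr d p -> (forall j, (j < d)%nat -> 0 <= l j <= 1) ->
  in_simplex d q -> 0 < e -> e <= e' ->
  dot d p l - dot d q l
  <= e' / 8 + (1 / e - 1 / e') * ln (INR d)
     + logscore d q (exp_update d p e e' l) / e - logscore d q p / e'.
Proof.
  intros Hd [Hp Hpsum] Hl Hq He Hee.
  set (a := e / e').
  assert (Ha : 0 <= a <= 1)
    by (unfold a; split; [apply Rdiv_le_0_compat | apply (Rdiv_le_1 e e')]; lra).
  set (x := fun j => p j * exp (- e' * l j)).
  assert (Hx : forall j, (j < d)%nat -> 0 < x j)
    by (intros; unfold x; apply Rmult_lt_0_compat; [auto | apply exp_pos]).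
  set (Z := rsum (fun i => Rpower (p i) a * exp (- e * l i)) d).
  (* the new weights are the a-th powers of the Hoeffding weights x_j *)
  assert (HZ : Z = rsum (fun j => exp (a * ln (x j))) d).
  { apply rsum_ext. intros j Hj. unfold x, Rpower.
    rewrite <- exp_plus, ln_mult, ln_exp by (try apply exp_pos; auto).
    f_equal. unfold a. field. lra. }
  assert (Hhoeff : ln (rsum x d) <= - e' * dot d p l + e' * e' / 8)
    by (apply hoeffding_lemma; auto; [intros; left; auto | lra]).
  assert (Hpower : ln Z <= (1 - a) * ln (INR d) + a * ln (rsum x d))
    by (rewrite HZ; apply log_sum_power_le; auto).
  rewrite logscore_exp_update by (auto; apply Hq). fold a Z.
  assert (Hhoeff' : ln (rsum x d) / e' <= - dot d p l + e' / 8).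
  { apply Rle_div_l; [lra|]. replace ((- dot d p l + e' / 8) * e')
      with (- e' * dot d p l + e' * e' / 8) by (field; lra). exact Hhoeff. }
  assert (Hpower' : ln Z / e <= (1 / e - 1 / e') * ln (INR d) + ln (rsum x d) / e').
  { apply Rle_div_l; [lra|].
    replace (((1 / e - 1 / e') * ln (INR d) + ln (rsum x d) / e') * e)
      with ((1 - a) * ln (INR d) + a * ln (rsum x d)) by (unfold a; field; lra).
    exact Hpower. }
  replace (e' / 8 + (1 / e - 1 / e') * ln (INR d)
           + (a * logscore d q p - e * dot d q l - ln Z) / e - logscore d q p / e')
    with (e' / 8 + (1 / e - 1 / e') * ln (INR d) - dot d q l - ln Z / e)
    by (unfold a; field; lra).
  lra.
Qed.

Lemma ln_nonneg (x : R) : 1 <= x -> 0 <= ln x.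
Proof. intros Hx. rewrite <- ln_1. apply ln_le; lra. Qed.

Lemma ln_ge_1 (x : R) : 3 <= x -> 1 <= ln x.
Proof. intros Hx. rewrite <- (ln_exp 1). apply ln_le; [apply exp_pos|]. pose proof exp_le_3. lra. Qed.

Lemma div_le_div_cross (a b x y : R) : 0 < x -> 0 < y -> a * y <= b * x -> a / x <= b / y.
Proof.
  intros Hx Hy H. apply (proj2 (Rle_div_l a (b / y) x Hx)).
  replace (b / y * x) with (b * x / y) by (field; lra).
  apply (proj1 (Rle_div_r a (b * x) y Hy)). exact H.
Qed.

(* M / sqrt (M / c) = sqrt (c M), the closed form of ln (d t) / eta_t. *)
Lemma div_sqrt_ratio (M c : R) : 0 < M -> 0 < c -> M / sqrt (M / c) = sqrt (c * M).
Proof.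
  intros HM Hc. rewrite sqrt_div_alt, sqrt_mult_alt by lra.
  assert (0 < sqrt M) by (apply sqrt_lt_R0; lra). assert (0 < sqrt c) by (apply sqrt_lt_R0; lra).
  rewrite <- (sqrt_sqrt M) at 1 by lra. field. lra.
Qed.

(* 1/sqrt u <= 2 (sqrt u - sqrt (u - 1)): the harmonic-type sum of 1/sqrt u telescopes. *)
Lemma inv_sqrt_le_diff (u : nat) : (1 <= u)%nat ->
  1 / sqrt (INR u) <= 2 * (sqrt (INR u) - sqrt (INR (u - 1))).
Proof.
  intros Hu. set (a := sqrt (INR u)). set (b := sqrt (INR (u - 1))).
  assert (Ha2 : a * a = INR u) by (apply sqrt_sqrt, pos_INR).
  assert (Hb2 : b * b = INR u - 1)
    by (unfold b; rewrite sqrt_sqrt, minus_INR by (lia || apply pos_INR); simpl; ring).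
  assert (Ha : 0 < a) by (apply sqrt_lt_R0, lt_0_INR; lia).
  assert (Hb : 0 <= b) by apply sqrt_pos.
  assert (b <= a) by (apply sqrt_le_1_alt, le_INR; lia).
  apply (proj2 (Rle_div_l 1 _ a Ha)). nra.
Qed.

Lemma log_ratio_antitone (D x : R) : 1 <= D -> 3 <= x ->
  ln (D * (x + 1)) / (x + 1) <= ln (D * x) / x.
Proof.
  intros HD Hx.
  assert (Hsplit : ln (D * (x + 1)) = ln (D * x) + ln (1 + 1 / x)).
  { rewrite <- ln_mult by (try apply Rplus_lt_0_compat; try apply Rdiv_lt_0_compat; nra).
    f_equal. field. lra. }
  assert (Hlog1 : x * ln (1 + 1 / x) <= 1).
  { assert (ln (1 + 1 / x) <= 1 / x).
    { rewrite <- (ln_exp (1 / x)) at 2. apply ln_le; [|apply exp_ineq1_le].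
      assert (0 < 1 / x) by (apply Rdiv_lt_0_compat; lra). lra. }
    apply Rle_trans with (x * (1 / x)); [apply Rmult_le_compat_l; lra | right; field; lra]. }
  assert (1 <= ln (D * x)) by (apply ln_ge_1; nra).
  apply div_le_div_cross; [lra | lra |]. rewrite Hsplit. nra.
Qed.

Lemma eta_thm_early (d t : nat) : (t <= 3)%nat -> eta_thm d t = sqrt (ln (INR d * 3) / 3).
Proof.
  intros Ht. unfold eta_thm. destruct (Nat.ltb_spec t 3); [reflexivity|].
  replace t with 3%nat by lia. simpl INR. f_equal. f_equal; [f_equal|]; ring.
Qed.

Lemma eta_thm_late (d t : nat) : (3 <= t)%nat -> eta_thm d t = sqrt (ln (INR d * INR t) / INR t).
Proof. intros Ht. unfold eta_thm. destruct (Nat.ltb_spec t 3); [lia | reflexivity]. Qed.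

Lemma eta_thm_pos (d t : nat) : (1 <= d)%nat -> 0 < eta_thm d t.
Proof.
  intros Hd. pose proof (le_INR _ _ Hd) as HdR. simpl INR in HdR.
  destruct (Nat.le_gt_cases t 3).
  - rewrite eta_thm_early by assumption. apply sqrt_lt_R0, Rdiv_lt_0_compat; [|lra].
    pose proof (ln_ge_1 (INR d * 3) ltac:(lra)). lra.
  - rewrite eta_thm_late by lia. pose proof (le_INR 3 t ltac:(lia)) as HtR. simpl INR in HtR.
    apply sqrt_lt_R0, Rdiv_lt_0_compat; [|lra].
    pose proof (ln_ge_1 (INR d * INR t) ltac:(nra)). lra.
Qed.

Lemma eta_thm_antitone (d j k : nat) : (1 <= d)%nat -> (j <= k)%nat -> eta_thm d k <= eta_thm d j.
Proof.
  intros Hd Hjk. induction Hjk as [|k Hjk IH]; [lra|]. eapply Rle_trans; [|exact IH].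
  destruct (Nat.le_gt_cases (S k) 3).
  - rewrite !eta_thm_early by lia. lra.
  - rewrite !eta_thm_late by lia. apply sqrt_le_1_alt. rewrite S_INR.
    pose proof (le_INR 1 d Hd). pose proof (le_INR 3 k ltac:(lia)). simpl INR in *.
    apply log_ratio_antitone; lra.
Qed.

Lemma eta_thm_prev_le (d T t : nat) : (1 <= d)%nat -> (3 <= T)%nat -> (1 <= t <= T)%nat ->
  eta_thm d (t - 1) <= sqrt (2 * ln (INR d * INR T) / INR t).
Proof.
  intros Hd HT Ht.
  pose proof (le_INR 1 d Hd) as HdR. pose proof (le_INR 3 T HT) as HTR.
  pose proof (le_INR 1 t ltac:(lia)) as HtR. pose proof (le_INR t T ltac:(lia)).
  simpl INR in HdR, HTR, HtR.
  set (L := ln (INR d * INR T)).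
  assert (HL : 1 <= L) by (apply ln_ge_1; nra).
  destruct (Nat.le_gt_cases t 4).
  - rewrite eta_thm_early by lia. apply sqrt_le_1_alt.
    assert (ln (INR d * 3) <= L) by (apply ln_le; nra).
    pose proof (le_INR t 4 ltac:(lia)). simpl INR in *.
    apply div_le_div_cross; lra || nra.
  - rewrite eta_thm_late by lia. apply sqrt_le_1_alt.
    pose proof (le_INR 5 t ltac:(lia)) as Ht5. simpl INR in Ht5.
    rewrite minus_INR by lia. simpl INR.
    assert (ln (INR d * (INR t - 1)) <= L) by (apply ln_le; nra).
    assert (0 <= ln (INR d * (INR t - 1))) by (apply ln_nonneg; nra).
    apply div_le_div_cross; lra || nra.
Qed.

Lemma psi_late (d t : nat) : (1 <= d)%nat -> (3 <= t)%nat ->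
  ln (INR d * INR t) / eta_thm d t = sqrt (INR t * ln (INR d * INR t)).
Proof.
  intros Hd Ht. pose proof (le_INR 1 d Hd) as HdR. pose proof (le_INR 3 t Ht) as HtR.
  simpl INR in HdR, HtR. rewrite eta_thm_late by assumption.
  apply div_sqrt_ratio; [|lra]. pose proof (ln_ge_1 (INR d * INR t) ltac:(nra)). lra.
Qed.

Lemma psi_one (d : nat) : (1 <= d)%nat ->
  ln (INR d * INR 1) / eta_thm d 1 <= sqrt (3 * ln (3 * INR d)).
Proof.
  intros Hd. pose proof (le_INR 1 d Hd) as HdR. simpl INR in *.
  rewrite eta_thm_early by lia. rewrite (Rmult_comm 3 (INR d)).
  set (M := ln (INR d * 3)).
  assert (HM : 1 <= M) by (apply ln_ge_1; lra).
  assert (0 < sqrt (M / 3)) by (apply sqrt_lt_R0; lra).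
  rewrite <- div_sqrt_ratio by lra. unfold Rdiv at 1 2. apply Rmult_le_compat_r.
  - left. apply Rinv_0_lt_compat. assumption.
  - apply ln_le; lra.
Qed.

Lemma psi_le_horizon (d s T : nat) : (1 <= d)%nat -> (1 <= s <= T)%nat ->
  ln (INR d * INR s) / eta_thm d s <= ln (INR d * INR T) / eta_thm d T.
Proof.
  intros Hd Hs. pose proof (le_INR 1 d Hd) as HdR. pose proof (le_INR 1 s ltac:(lia)) as HsR.
  pose proof (le_INR s T ltac:(lia)). simpl INR in HdR, HsR.
  assert (0 <= ln (INR d * INR s)) by (apply ln_nonneg; nra).
  assert (ln (INR d * INR s) <= ln (INR d * INR T)) by (apply ln_le; nra).
  pose proof (eta_thm_pos d T Hd). pose proof (eta_thm_antitone d s T Hd ltac:(lia)).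
  apply div_le_div_cross; [apply eta_thm_pos; assumption | assumption | nra].
Qed.

Lemma phat_one (d : nat) (eta alpha : nat -> R) (l : nat -> nat -> R) :
  phat d eta alpha l 1 = fun _ => 1 / INR d.
Proof. reflexivity. Qed.

Lemma phat_succ (d : nat) (eta alpha : nat -> R) (l : nat -> nat -> R) (t : nat) :
  (1 <= t)%nat ->
  phat d eta alpha l (S t) = fs_update d (phat d eta alpha l t) (eta t) (eta (t - 1)%nat) (alpha t) (l t).
Proof.
  intros Ht. destruct t as [|t]; [lia|]. unfold phat.
  replace (S (S t) - 1)%nat with (S t) by lia. replace (S t - 1)%nat with t by lia. reflexivity.
Qed.

Lemma phat_distr (d : nat) (eta alpha : nat -> R) (l : nat -> nat -> R) (t : nat) :
  (1 <= d)%nat -> (forall u, (1 <= u)%nat -> 0 < alpha u <= 1) ->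
  pos_distr d (phat d eta alpha l t).
Proof.
  intros Hd Halpha. unfold phat. destruct (t - 1)%nat as [|k]; simpl.
  - assert (0 < INR d) by (apply lt_0_INR; lia).
    split; [intros; apply Rdiv_lt_0_compat; lra | rewrite rsum_const; field; lra].
  - apply fs_update_distr; [assumption | apply Halpha; lia].
Qed.

Lemma alpha_thm_range (t : nat) : (1 <= t)%nat -> 0 < alpha_thm t <= 1.
Proof.
  intros Ht. pose proof (le_INR 1 t Ht) as HtR. simpl INR in HtR. unfold alpha_thm.
  split; [apply Rdiv_lt_0_compat | apply (Rdiv_le_1 1 (INR t))]; lra.
Qed.

Lemma range_sum_single (g : nat -> R) (r : nat) : range_sum g r r = g r.
Proof. unfold range_sum. rewrite Nat.sub_diag. simpl. rewrite Nat.add_0_r. ring. Qed.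

Lemma range_sum_succ (g : nat -> R) (r s : nat) : (r <= s)%nat ->
  range_sum g r (S s) = range_sum g r s + g (S s).
Proof.
  intros Hrs. unfold range_sum. replace (S s - r)%nat with (S (s - r)) by lia.
  simpl rsum at 1. do 2 f_equal. lia.
Qed.

Lemma range_sum_split_first (g : nat -> R) (r s : nat) : (r < s)%nat ->
  range_sum g r s = g r + range_sum g (S r) s.
Proof.
  intros Hrs. unfold range_sum. replace (S (s - r)) with (S (S (s - S r))) by lia.
  rewrite rsum_shift, Nat.add_0_r. f_equal. apply rsum_ext. intros k _. f_equal. lia.
Qed.

Lemma range_sum_minus (f g : nat -> R) (r s : nat) :
  range_sum f r s - range_sum g r s = range_sum (fun t => f t - g t) r s.
Proof. unfold range_sum. rewrite rsum_minus. reflexivity. Qed.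

Lemma range_sum_telescope_le (g f : nat -> R) (r s : nat) : (1 <= r <= s)%nat ->
  (forall t, (r <= t <= s)%nat -> g t <= f t - f (t - 1)%nat) ->
  range_sum g r s <= f s - f (r - 1)%nat.
Proof.
  intros [Hr Hrs] Hg. induction Hrs as [|s Hrs IH].
  - rewrite range_sum_single. apply Hg. lia.
  - rewrite range_sum_succ by assumption.
    pose proof (IH ltac:(intros; apply Hg; lia)). pose proof (Hg (S s) ltac:(lia)).
    replace (S s - 1)%nat with s in * by lia. lra.
Qed.

(* sqrt (2 L) sqrt T / 4 + sqrt (T L) <= sqrt (2 T L), as sqrt 2 >= 4/3. *)
Lemma horizon_constant (T L : R) : 0 <= T -> 0 <= L ->
  sqrt (2 * L) * sqrt T / 4 + sqrt (T * L) <= sqrt (2 * T * L).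
Proof.
  intros HT HL. rewrite !sqrt_mult_alt by lra.
  assert (Hsqrt2 : 4 / 3 <= sqrt 2).
  { rewrite <- (sqrt_square (4 / 3)) by lra. apply sqrt_le_1_alt. lra. }
  pose proof (sqrt_pos T). pose proof (sqrt_pos L).
  assert (0 <= sqrt T * sqrt L) by (apply Rmult_le_pos; assumption). nra.
Qed.

Section FixedShareRegret.

Variables (d T : nat) (l : nat -> nat -> R) (q : nat -> R).
Hypothesis Hd : (1 <= d)%nat.
Hypothesis HT : (3 <= T)%nat.
Hypothesis Hl : forall t j, (1 <= t <= T)%nat -> (j < d)%nat -> 0 <= l t j <= 1.
Hypothesis Hq : in_simplex d q.

Let p (t : nat) : nat -> R := phat d (eta_thm d) alpha_thm l t.
Let regret (t : nat) : R := dot d (p t) (l t) - dot d q (l t).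
Let score (t : nat) : R := logscore d q (p t).
Let psi (t : nat) : R := ln (INR d * INR t) / eta_thm d t.
(* The potential after round t: the scaled log-barrier plus the rescaled
   log-score of the next prediction; it stays between 0 and psi t. *)
Let potential (t : nat) : R := psi t + score (S t) / eta_thm d t.
(* The cumulative Hoeffding budget: budget t - budget (t-1) dominates eta_(t-1)/8. *)
Let budget (t : nat) : R := sqrt (2 * ln (INR d * INR T)) * sqrt (INR t) / 4.

Lemma p_distr (t : nat) : pos_distr d (p t).
Proof. apply phat_distr; [exact Hd | exact alpha_thm_range]. Qed.

Lemma learning_rate_increment (t : nat) : (1 <= t <= T)%nat ->
  eta_thm d (t - 1) / 8 <= budget t - budget (t - 1)%nat.
Proof.
  intros Ht. unfold budget. set (C := sqrt (2 * ln (INR d * INR T))).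
  assert (HtR : 0 < INR t) by (apply lt_0_INR; lia).
  pose proof (eta_thm_prev_le d T t Hd HT Ht) as Heta.
  rewrite sqrt_div_alt in Heta by exact HtR. fold C in Heta.
  pose proof (inv_sqrt_le_diff t ltac:(lia)) as Hdiff.
  assert (0 <= C) by apply sqrt_pos.
  replace (C / sqrt (INR t)) with (C * (1 / sqrt (INR t))) in Heta by (unfold Rdiv; ring).
  assert (C * (1 / sqrt (INR t)) <= C * (2 * (sqrt (INR t) - sqrt (INR (t - 1)))))
    by (apply Rmult_le_compat_l; assumption).
  lra.
Qed.

Lemma run_round_regret (t : nat) : (1 <= t <= T)%nat ->
  regret t <= eta_thm d (t - 1) / 8 + (1 / eta_thm d t - 1 / eta_thm d (t - 1)) * ln (INR d)
             + logscore d q (exp_update d (p t) (eta_thm d t) (eta_thm d (t - 1)) (l t)) / eta_thm d t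
             - score t / eta_thm d (t - 1).
Proof.
  intros Ht. apply round_regret; try assumption.
  - apply p_distr.
  - intros j Hj. apply Hl; assumption.
  - apply eta_thm_pos. exact Hd.
  - apply eta_thm_antitone; [exact Hd | lia].
Qed.

Lemma potential_nonneg (u : nat) : (1 <= u)%nat -> 0 <= potential u.
Proof.
  intros Hu. pose proof (eta_thm_pos d u Hd) as Heta.
  assert (HuR : 1 <= INR u) by (apply (le_INR 1); exact Hu).
  assert (HdR : 1 <= INR d) by (apply (le_INR 1); exact Hd).
  (* the uniform share alpha_u / d of p_(u+1) keeps its score above - ln (d u) *)
  assert (Hshare : - ln (INR d * INR u) <= score (S u)).
  { unfold score, p. rewrite phat_succ by exact Hu.
    replace (- ln (INR d * INR u)) with (ln (alpha_thm u / INR d)).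
    - apply fs_update_logscore_ge_share; [exact Hd | exact Hq | apply alpha_thm_range; exact Hu].
    - unfold alpha_thm. rewrite !ln_div, ln_1, ln_mult by (try apply Rdiv_lt_0_compat; lra). ring. }
  unfold potential, psi. rewrite <- Rdiv_plus_distr.
  apply Rdiv_le_0_compat; lra.
Qed.

Lemma potential_le_psi (u : nat) : potential u <= psi u.
Proof.
  unfold potential. pose proof (eta_thm_pos d u Hd).
  assert (score (S u) <= 0) by (apply logscore_nonpos; [exact Hq | apply p_distr]).
  assert (score (S u) / eta_thm d u <= 0)
    by (apply Rmult_le_0_r; [assumption | left; apply Rinv_0_lt_compat; assumption]).
  lra.
Qed.

(* From the second round on, each round's regret is bounded by the increase
   of budget + potential.  The fixed share mixing with alpha_t = 1/t costs
   ln t - ln (t - 1) in score, which psi absorbs. *)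
Lemma round_potential (t : nat) : (2 <= t <= T)%nat ->
  regret t <= (budget t + potential t) - (budget (t - 1)%nat + potential (t - 1)%nat).
Proof.
  intros Ht. pose proof (run_round_regret t ltac:(lia)) as Hround.
  pose proof (learning_rate_increment t ltac:(lia)) as Hbudget.
  set (et := eta_thm d t) in *. set (ep := eta_thm d (t - 1)) in *.
  set (V := logscore d q (exp_update d (p t) et ep (l t))) in *.
  assert (Het : 0 < et) by apply eta_thm_pos, Hd.
  assert (Hep : et <= ep) by (apply eta_thm_antitone; [exact Hd | lia]).
  assert (HtR : 2 <= INR t) by (apply (le_INR 2); lia).
  assert (HdR : 1 <= INR d) by (apply (le_INR 1); exact Hd).
  assert (Ht1 : INR (t - 1) = INR t - 1) by (rewrite minus_INR by lia; reflexivity).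
  (* mixing costs - ln (1 - 1/t) = ln t - ln (t - 1) *)
  assert (Hmix : V + (ln (INR (t - 1)) - ln (INR t)) <= score (S t)).
  { unfold score, p. rewrite phat_succ by lia. fold p.
    replace (ln (INR (t - 1)) - ln (INR t)) with (ln (1 - alpha_thm t)).
    - apply fs_update_logscore_ge_exp; [exact Hd | exact Hq |].
      pose proof (alpha_thm_range t ltac:(lia)). unfold alpha_thm in *.
      split; [lra|]. apply (proj2 (Rlt_div_l 1 1 (INR t) ltac:(lra))). lra.
    - rewrite Ht1, <- ln_div by lra. f_equal. unfold alpha_thm. field. lra. }
  assert (HmixV : V / et <= score (S t) / et + ln (INR t) / et - ln (INR (t - 1)) / et).
  { replace (score (S t) / et + ln (INR t) / et - ln (INR (t - 1)) / et)
      with ((score (S t) + ln (INR t) - ln (INR (t - 1))) / et) by (field; lra).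
    apply Rmult_le_compat_r; [left; apply Rinv_0_lt_compat|]; lra. }
  (* the barrier term ln (t - 1) / eta only grows as eta decreases *)
  assert (Hbarrier : ln (INR (t - 1)) / ep <= ln (INR (t - 1)) / et).
  { apply div_le_div_cross; [lra | lra |].
    assert (0 <= ln (INR (t - 1))) by (apply ln_nonneg; lra). nra. }
  unfold potential, psi. replace (S (t - 1)) with t by lia. fold et ep.
  rewrite !ln_mult, !Rdiv_plus_distr by lra.
  replace ((1 / et - 1 / ep) * ln (INR d)) with (ln (INR d) / et - ln (INR d) / ep) in Hround
    by (field; lra).
  lra.
Qed.

(* The first round: p_1 is uniform and eta_0 = eta_1. *)
Lemma first_round : regret 1 <= budget 1 + psi 1.
Proof.
  pose proof (run_round_regret 1 ltac:(lia)) as Hround.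
  pose proof (learning_rate_increment 1 ltac:(lia)) as Hbudget.
  simpl (1 - 1)%nat in *.
  assert (Heta : eta_thm d 0 = eta_thm d 1) by (rewrite !eta_thm_early by lia; reflexivity).
  assert (Hbudget0 : budget 0 = 0) by (unfold budget; simpl INR; rewrite sqrt_0; field).
  assert (Hscore1 : score 1 = - ln (INR d)).
  { unfold score, p. rewrite phat_one, logscore_const by apply Hq.
    rewrite ln_div, ln_1 by (lra || apply lt_0_INR; lia). ring. }
  set (V := logscore d q (exp_update d (p 1) (eta_thm d 1) (eta_thm d 0) (l 1%nat))) in *.
  assert (HV : V / eta_thm d 1 <= 0).
  { pose proof (eta_thm_pos d 1 Hd).
    apply Rmult_le_0_r; [apply logscore_nonpos; [exact Hq | apply exp_update_distr; exact Hd]|].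
    left; apply Rinv_0_lt_compat; assumption. }
  rewrite Heta, Hscore1, Hbudget0 in *. unfold psi. simpl INR. rewrite Rmult_1_r.
  replace ((1 / eta_thm d 1 - 1 / eta_thm d 1) * ln (INR d)) with 0 in Hround by ring.
  replace (- ln (INR d) / eta_thm d 1) with (- (ln (INR d) / eta_thm d 1)) in Hround
    by (unfold Rdiv; ring).
  lra.
Qed.

Lemma interval_regret (r s : nat) : (1 <= r)%nat -> (r <= s)%nat -> (s <= T)%nat ->
  range_sum regret r s <= budget T + psi T + psi 1.
Proof.
  intros Hr Hrs HsT.
  assert (Hfrom2 : forall r', (2 <= r' <= s)%nat ->
            range_sum regret r' s
            <= (budget s + potential s) - (budget (r' - 1)%nat + potential (r' - 1)%nat)).
  { intros r' Hr'. apply (range_sum_telescope_le regret (fun t => budget t + potential t));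
      [lia | intros t Ht; apply round_potential; lia]. }
  assert (Hbudget : forall u, (u <= T)%nat -> 0 <= budget u <= budget T).
  { intros u Hu. unfold budget. pose proof (sqrt_pos (2 * ln (INR d * INR T))).
    pose proof (sqrt_pos (INR u)).
    assert (sqrt (INR u) <= sqrt (INR T)) by (apply sqrt_le_1_alt, le_INR; exact Hu).
    split; nra. }
  assert (Hpsi : forall u, (1 <= u <= T)%nat -> 0 <= psi u <= psi T).
  { intros u Hu. split; [|apply psi_le_horizon; assumption].
    apply Rdiv_le_0_compat; [|apply eta_thm_pos; exact Hd].
    apply ln_nonneg. pose proof (le_INR 1 d Hd). pose proof (le_INR 1 u ltac:(lia)).
    simpl INR in *. nra. }
  pose proof (Hpsi 1%nat ltac:(lia)). pose proof (Hpsi s ltac:(lia)).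
  pose proof (potential_le_psi s). pose proof (Hbudget s HsT).
  destruct (Nat.eq_dec r 1) as [->|Hr1].
  - destruct (Nat.eq_dec s 1) as [->|Hs1].
    + rewrite range_sum_single. pose proof first_round. pose proof (Hbudget 1%nat ltac:(lia)). lra.
    + rewrite range_sum_split_first by lia.
      pose proof first_round. pose proof (Hfrom2 2%nat ltac:(lia)).
      pose proof (potential_nonneg 1 ltac:(lia)). simpl (2 - 1)%nat in *. lra.
  - pose proof (Hfrom2 r ltac:(lia)). pose proof (potential_nonneg (r - 1) ltac:(lia)).
    pose proof (Hbudget (r - 1)%nat ltac:(lia)). lra.
Qed.

End FixedShareRegret.

Theorem mainTheorem14 :
  forall (d : nat) (T : nat) (l : nat -> nat -> R),
    (1 <= d)%nat -> (3 <= T)%nat ->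
    (forall t j, (1 <= t <= T)%nat -> (j < d)%nat -> 0 <= l t j <= 1) ->
    forall (r s : nat), (1 <= r)%nat -> (r <= s)%nat -> (s <= T)%nat ->
    forall q : nat -> R, in_simplex d q ->
      range_sum (fun t => dot d (phat d (eta_thm d) alpha_thm l t) (l t)) r s
      - range_sum (fun t => dot d q (l t)) r s
      <= sqrt (2 * INR T * ln (INR d * INR T)) + sqrt (3 * ln (3 * INR d)).
Proof.
  intros d T l Hd HT Hl r s Hr Hrs HsT q Hq.
  rewrite range_sum_minus.
  pose proof (interval_regret d T l q Hd HT Hl Hq r s Hr Hrs HsT) as Hregret.
  cbv beta in Hregret. rewrite psi_late in Hregret by assumption.
  pose proof (psi_one d Hd).
  assert (HL : 0 <= ln (INR d * INR T))
    by (apply ln_nonneg; pose proof (le_INR 1 d Hd); pose proof (le_INR 3 T HT); simpl INR in *; nra).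
  pose proof (horizon_constant (INR T) (ln (INR d * INR T)) (pos_INR T) HL).
  lra.
Qed.
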